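(* Let $\mathcal C$ be a $\Delta$-complex labeled over $B(X,P)$ with set of $0$-cells $\mathcal C^{(0)}$. Define partial maps on $\mathcal C^{(0)}$ by: for $x\in X$, $v\cdot x=w$ iff there is a $1$-cell labeled $x$ from $v$ to $w$; $v\cdot x^{-1}=w$ iff there is a $1$-cell labeled $x$ from $w$ to $v$; for $\rho\in P$, $v\cdot\rho=v$ iff $v$ is the root of some cell labeled $\rho$ (and undefined otherwise). These are partial injections, and this action of the generators extends to a well-defined right action of $M(X,P)$ on $\mathcal C^{(0)}$ by partial injections (i.e. a homomorphism from $M(X,P)$ into the symmetric inverse monoid on $\mathcal C^{(0)}$, acting on the right).
   Context: A $\Delta$-complex is a CW-complex in which each $k$-cell $c$ has a distinguished characteristic map $\sigma_c\colon\Delta^k\to\mathcal C$, $\Delta^k=[v_0,\dots,v_k]$ the standard simplex with ordered vertices, such that the restriction of $\sigma_c$ to each $(k-1)$-face (identified order-preservingly with $\Delta^{k-1}$) is the distinguished characteristic map of a $(k-1)$-cell. The root of $c$ is $\sigma_c(v_0)$; a $1$-cell $e$ is directed from $\sigma_e(v_0)$ to $\sigma_e(v_1)$. An immersion is a continuous map that is a local homeomorphism onto its image and commutes with characteristic maps (each $k$-cell $d$ maps onto a $k$-cell with $f\circ\sigma_d=\sigma_{f(d)}$). $B(X,P)$ is a $\Delta$-complex with one $0$-cell, $1$-cells indexed by $X$, $k$-cells ($2\le k\le n$) indexed by $P_k$, index sets pairwise disjoint, $P=\bigcup P_k$. $\mathcal C$ is labeled over $B(X,P)$ via an immersion $f_{\mathcal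 C}\colon\mathcal C\to B(X,P)$, and $\ell(c)$ is the index of $f_{\mathcal C}(c)$; $\ell(e^{-1})=\ell(e)^{-1}$. Boundary labels: for a $k$-cell $c$ ($k\ge2$) with characteristic map $\sigma$, let $c_i$ be the $(k-1)$-cell whose characteristic map is $\sigma$ restricted to the face omitting $v_i$, and $e(c)=\sigma([v_0,v_1])$; $bl(c)=\ell(\sigma[v_0,v_1])\ell(\sigma[v_1,v_2])\ell(\sigma[v_0,v_2])^{-1}$ if $k=2$, and $bl(c)=\ell(c_k)\cdots\ell(c_1)\ell(e(c))\ell(c_0)\ell(e(c))^{-1}$ if $k\ge3$; $bl(\rho)$ denotes the boundary label of the cell of $B(X,P)$ labeled $\rho$. $M(X,P)$ is the inverse monoid presented by generators $X\cup P$ and relations $\rho^2=\rho$, $\rho=\rho\,bl(\rho)$ for $\rho\in P$. *)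

From mathcomp Require Import all_boot.
Set Implicit Arguments. Unset Strict Implicit. Unset Printing Implicit Defensive.

(** * Delta-complexes, combinatorially (semi-simplicial sets).
    [cell k] is the type of k-cells; [face k i c] is the (k)-cell obtained by
    restricting the characteristic map of the (k+1)-cell [c] to the face
    omitting vertex [v_i] (meaningful for [i <= k+1]). *)

Definition simplicial_ids (cell : nat -> Type)
  (face : forall k, nat -> cell k.+1 -> cell k) : Prop :=
  forall k (i j : nat) (c : cell k.+2), i < j -> j <= k.+2 ->
    face k i (face k.+1 j c) = face k j.-1 (face k.+1 i c).

Section Ops.
Variable cell : nat -> Type.
Variable face : forall k, nat -> cell k.+1 -> cell k.

(** [vert m c j] = sigma_c(v_j), the j-th vertex (0-cell) of the m-cell c. *)
Fixpoint vert (m : nat) : cell m -> nat -> cell 0 :=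
  match m return cell m -> nat -> cell 0 with
  | 0 => fun c _ => c
  | m'.+1 => fun c j =>
      if j == m'.+1 then @vert m' (@face m' 0 c) m'
      else @vert m' (@face m' m'.+1 c) j
  end.

Definition root m (c : cell m) : cell 0 := @vert m c 0.

(** [edge01 m c] = sigma_c([v_0,v_1]) for an (m+1)-cell c *)
Fixpoint edge01 (m : nat) : cell m.+1 -> cell 1 :=
  match m return cell m.+1 -> cell 1 with
  | 0 => fun c => c
  | m'.+1 => fun c => @edge01 m' (@face m'.+1 m'.+2 c)
  end.
End Ops.

(** Immersion: commutes with characteristic maps (faces), and is locally
    injective: at each 0-cell, distinct corners (cell, vertex position) have
    distinct images (injectivity on open stars of vertices). *)
Definition immersion (Ccell Dcell : nat -> Type)
  (Cface : forall k, nat -> Ccell k.+1 -> Ccell k)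
  (Dface : forall k, nat -> Dcell k.+1 -> Dcell k)
  (f : forall k, Ccell k -> Dcell k) : Prop :=
  (forall k (i : nat) (c : Ccell k.+1), i <= k.+1 ->
      f k (Cface k i c) = Dface k i (f k.+1 c)) /\
  (forall k (c c' : Ccell k) (j : nat), j <= k ->
      vert Cface c j = vert Cface c' j -> f k c = f k c' -> c = c').

Definition Bcell (X : Type) (P : nat -> Type) (k : nat) : Type :=
  match k with
  | 0 => unit
  | 1 => X
  | k'.+2 => P k'.+2
  end.

Inductive gen (X : Type) (P : nat -> Type) : Type :=
| GX : X -> gen X P
| GP : forall k, P k.+2 -> gen X P.

(** letters of X cup P and their formal inverses: (g, true) stands for g^-1 *)
Definition letter X P := (gen X P * bool)%type.
Definition word X P := seq (letter X P).

Definition inv_word X P (w : word X P) : word X P :=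
  rev (map (fun l => (l.1, ~~ l.2)) w).

Definition genOf X P (k : nat) : Bcell X P k.+1 -> gen X P :=
  match k return Bcell X P k.+1 -> gen X P with
  | 0 => fun x => GX P x
  | k'.+1 => fun r => @GP X P k' r
  end.
Arguments genOf {X P} k _.

Definition bl X P (bface : forall k, nat -> Bcell X P k.+1 -> Bcell X P k)
  (k : nat) : P k.+2 -> word X P :=
  match k return P k.+2 -> word X P with
  | 0 => fun r =>
      [:: (genOf 0 (bface 1 2 r), false);
          (genOf 0 (bface 1 0 r), false);
          (genOf 0 (bface 1 1 r), true)]
  | k'.+1 => fun r =>
      let e : X := @edge01 (Bcell X P) bface k'.+2 r in
      [seq (genOf k'.+1 (bface k'.+2 i r), false) | i <- rev (iota 1 k'.+3)]
      ++ [:: (GX P e, false); (genOf k'.+1 (bface k'.+2 0 r), false);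
             (GX P e, true)]
  end.

(** The congruence presenting the inverse monoid
    M(X,P) = Inv< X cup P | rho^2 = rho, rho = rho bl(rho) >
    on the free monoid of words over (X cup P) cup (X cup P)^-1:
    generated by the Wagner relations and the defining relations. *)
Inductive Mcong X P (bface : forall k, nat -> Bcell X P k.+1 -> Bcell X P k)
  : word X P -> word X P -> Prop :=
| mc_refl u : Mcong bface u u
| mc_sym u v : Mcong bface u v -> Mcong bface v u
| mc_trans u v w : Mcong bface u v -> Mcong bface v w -> Mcong bface u w
| mc_cat u u' w w' : Mcong bface u u' -> Mcong bface w w' ->
    Mcong bface (u ++ w) (u' ++ w')
| mc_wagner1 u : Mcong bface (u ++ inv_word u ++ u) u
| mc_wagner2 u w :
    Mcong bface (u ++ inv_word u ++ w ++ inv_word w)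
                (w ++ inv_word w ++ u ++ inv_word u)
| mc_idem k (r : P k.+2) :
    Mcong bface [:: (GP X r, false); (GP X r, false)] [:: (GP X r, false)]
| mc_bl k (r : P k.+2) :
    Mcong bface [:: (GP X r, false)] ((GP X r, false) :: bl bface r).

(** The action of generators on 0-cells of C (as relations: v . g = w). *)
Section Action.
Variables (X : Type) (P : nat -> Type).
Variable Ccell : nat -> Type.
Variable Cface : forall k, nat -> Ccell k.+1 -> Ccell k.
Variable f : forall k, Ccell k -> Bcell X P k.

Definition gen_step (g : gen X P) (v w : Ccell 0) : Prop :=
  match g with
  | GX x => exists e : Ccell 1,
      @f 1 e = x /\ vert Cface e 0 = v /\ vert Cface e 1 = w
  | @GP _ _ k r => v = w /\
      exists c : Ccell k.+2, @f k.+2 c = r /\ root Cface c = v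
  end.

Definition step (l : letter X P) (v w : Ccell 0) : Prop :=
  if l.2 then gen_step l.1 w v else gen_step l.1 v w.

Fixpoint act (u : word X P) (v w : Ccell 0) : Prop :=
  match u with
  | [::] => v = w
  | l :: u' => exists z, step l v z /\ act u' z w
  end.
End Action.

Definition partial_injection (T : Type) (R : T -> T -> Prop) : Prop :=
  (forall v w w', R v w -> R v w' -> w = w') /\
  (forall v v' w, R v w -> R v' w -> v = v').

(** The action of a letter is read off the 1-cells, resp. the roots of cells,
    of C; local injectivity of the immersion at the endpoints of 1-cells makes
    each letter, hence each word, act by a partial injection.  A word
    [u u^-1] then acts as the identity on the domain of [u], which gives the
    Wagner relations of inverse monoids, and [rho^2 = rho] holds since [rho]
    acts as a partial identity.  For [rho = rho bl(rho)], the boundary word of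
    a cell [c] labeled [rho] traces a loop of faces of [c] based at its root,
    so [bl(rho)] acts as the identity on every root of such a cell. *)

From Pilot Require Import Defs.
From mathcomp Require Import all_boot.
From Stdlib Require Import Setoid.

Section Faces.
Context {Ccell : nat -> Type} {Cface : forall k, nat -> Ccell k.+1 -> Ccell k}.
Hypothesis hC : simplicial_ids Cface.

Lemma vert_face m (c : Ccell m.+1) i j : i <= m.+1 -> j <= m ->
  vert Cface (Cface m i c) j = vert Cface c (j + (i <= j)).
Proof.
elim: m c i j => [|m IH] c i j Hi Hj.
  have -> : j = 0 by case: j Hj.
  by case: i Hi => [|[|//]].
have [->|Him] := eqVneq i m.+2.
  have Hlt : j < m.+2 by apply: leq_trans Hj _.
  by rewrite leqNgt Hlt addn0 [in RHS]/= ltn_eqF.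
have Hi' : i <= m.+1 by rewrite -ltnS ltn_neqAle Him Hi.
have [->|Nj] := eqVneq j m.+1.
  case: i Hi Hi' Him => [|i] Hi Hi' Him; first by rewrite /= eqxx addn1 eqxx.
  rewrite /= eqxx Hi' addn1 eqxx (hC _ 0 i.+1 c) //= IH //.
  by rewrite -ltnS Hi' addn1 /= eqxx.
have Hjm : j <= m by rewrite -ltnS ltn_neqAle Nj Hj.
rewrite /= (negbTE Nj) -(hC _ i m.+2 c) // IH // ltn_eqF //.
by rewrite ltnS -[m.+1]addn1 leq_add // leq_b1.
Qed.

Lemma root_face m (c : Ccell m.+1) i :
  i <= m.+1 -> Defs.root Cface (Cface m i c) = vert Cface c (i == 0).
Proof. by move=> Hi; rewrite /Defs.root vert_face //; case: i Hi. Qed.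

Lemma vert_edge01 m (c : Ccell m.+1) j :
  j <= 1 -> vert Cface (edge01 Cface c) j = vert Cface c j.
Proof.
elim: m c => [|m IH] c Hj //.
by case: j Hj IH => [|[|//]] _ IH; exact: (IH (Cface m.+1 m.+2 c)).
Qed.

End Faces.

Section Action.
Context {X : Type} {P : nat -> Type}.
Context {bface : forall k, nat -> Bcell X P k.+1 -> Bcell X P k}.
Context {Ccell : nat -> Type} {Cface : forall k, nat -> Ccell k.+1 -> Ccell k}.
Hypothesis hC : simplicial_ids Cface.
Context {f : forall k, Ccell k -> Bcell X P k}.
Hypothesis hf : immersion Cface bface f.

Local Notation act := (act Cface f).
Local Notation step := (step Cface f).
Local Notation root := (Defs.root Cface).

Definition act_equiv (u u' : word X P) : Prop :=
  forall v w, act u v w <-> act u' v w.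

Lemma f_edge01 m (c : Ccell m.+1) : f 1 (edge01 Cface c) = edge01 bface (f m.+1 c).
Proof. by elim: m c => [|m IH] c //=; rewrite IH hf.1. Qed.

Lemma gen_step_partial_inj (g : gen X P) : partial_injection (gen_step Cface f g).
Proof.
case: g => [x|k r]; split.
- move=> v w w' [e [fe [e0 e1]]] [e' [fe' [e0' e1']]].
  have ee' : e = e' by apply: (hf.2 1 e e' 0); rewrite ?e0 ?e0' ?fe ?fe'.
  by rewrite -e1 -e1' ee'.
- move=> v v' w [e [fe [e0 e1]]] [e' [fe' [e0' e1']]].
  have ee' : e = e' by apply: (hf.2 1 e e' 1); rewrite ?e1 ?e1' ?fe ?fe'.
  by rewrite -e0 -e0' ee'.
- by move=> v w w' [<- _] [<- _].
- by move=> v v' w [-> _] [-> _].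
Qed.

Lemma step_partial_inj (l : letter X P) : partial_injection (step l).
Proof.
have [inj1 inj2] := gen_step_partial_inj l.1.
rewrite /Defs.step; case: l.2; split=> ? ? ?.
- exact: inj2.
- exact: inj1.
- exact: inj1.
- exact: inj2.
Qed.

Lemma act_partial_inj (u : word X P) : partial_injection (act u).
Proof.
elim: u => [|l u [IH1 IH2]] /=; first by split=> ? ? ? -> ->.
have [s1 s2] := step_partial_inj l.
split=> v v' w [z [a b]] [z' [a' b']].
  by have ez := s1 _ _ _ a a'; subst z'; exact: IH1 b b'.
by have ez := IH2 _ _ _ b b'; subst z'; exact: s2 a a'.
Qed.

Lemma act_cat (s t : word X P) v w :
  act (s ++ t) v w <-> exists z, act s v z /\ act t z w.
Proof.
elim: s v => [|l s IH] v /=.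
  by split=> [h | [z [-> h]]]; first by exists v.
split=> [[z [hl /IH [y [h1 h2]]]] | [y [[z [hl h1]] h2]]].
  by exists y; split=> //; exists z.
by exists z; split=> //; apply/IH; exists y.
Qed.

Lemma act_inv_word (u : word X P) v w : act (inv_word u) v w <-> act u w v.
Proof.
rewrite /inv_word; elim: u v w => [|l u IH] v w /=; first by split=> ->.
rewrite rev_cons -cats1 act_cat.
have step_flip a b : step (l.1, ~~ l.2) a b <-> step l b a.
  by rewrite /Defs.step /=; case: l.2.
split=> [[z [/IH h1 [y [/step_flip h2 <-]]]] | [z [h1 h2]]]; first by exists z.
by exists z; split; [apply/IH | exists w; split=> //; apply/step_flip].
Qed.

Lemma act_cat_inv_word (u : word X P) v w :
  act (u ++ inv_word u) v w <-> v = w /\ exists z, act u v z.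
Proof.
have [_ inj] := act_partial_inj u.
rewrite act_cat; split=> [[z [h1 /act_inv_word h2]] | [<- [z h]]].
  by split; [exact: inj h1 h2 | exists z].
by exists z; split=> //; apply/act_inv_word.
Qed.

Lemma act_wagner1 (u : word X P) : act_equiv (u ++ inv_word u ++ u) u.
Proof.
move=> v w; rewrite catA act_cat; split=> [[z [/act_cat_inv_word [<- _] h]] // | h].
by exists v; split=> //; apply/act_cat_inv_word; split=> //; exists w.
Qed.

Lemma act_wagner2 (u w : word X P) :
  act_equiv (u ++ inv_word u ++ w ++ inv_word w) (w ++ inv_word w ++ u ++ inv_word u).
Proof.
have idempotents_act (s t : word X P) a b :
    act (s ++ inv_word s ++ t ++ inv_word t) a b <->
    a = b /\ (exists z, act s a z) /\ (exists z, act t a z).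
  rewrite catA act_cat; split=> [[z [/act_cat_inv_word [<- h1] /act_cat_inv_word [<- h2]]] //|].
  by case=> <- [h1 h2]; exists a; split; apply/act_cat_inv_word.
by move=> a b; rewrite !idempotents_act; split=> -[-> [h1 h2]].
Qed.

Lemma act_GP k (r : P k.+2) v w :
  act [:: (GP X r, false)] v w <-> v = w /\ exists c : Ccell k.+2, f k.+2 c = r /\ root c = v.
Proof. by split=> [[z [h <-]] | h] //; exists w. Qed.

Lemma act_idem k (r : P k.+2) :
  act_equiv [:: (GP X r, false); (GP X r, false)] [:: (GP X r, false)].
Proof.
move=> v w; split=> [[z [[<- h] [z' [[<- _] <-]]]] | /act_GP [<- h]].
  exact/act_GP.
by exists v; split; [split | exists v].
Qed.

Lemma act_map_loops (F : nat -> letter X P) (s : seq nat) v :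
  (forall i, i \in s -> step (F i) v v) -> act (map F s) v v.
Proof.
elim: s => [|i s IH] h //=; exists v; split; first by apply: h; rewrite inE eqxx.
by apply: IH => j hj; apply: h; rewrite inE hj orbT.
Qed.

Lemma act_bl_root k (c : Ccell k.+2) : act (bl bface (f k.+2 c)) (root c) (root c).
Proof.
have edge_step i j (e : Ccell 1) (l := (GX P (f 1 e), false)) :
  vert Cface e 0 = i -> vert Cface e 1 = j -> step l i j by exists e.
case: k c => [|k] c; cbv beta iota delta [bl].
  exists (vert Cface c 1); split; first by rewrite -hf.1 //; apply: edge_step; rewrite vert_face.
  exists (vert Cface c 2); split; first by rewrite -hf.1 //; apply: edge_step; rewrite vert_face.
  exists (root c); split=> //.
  by rewrite -hf.1 //; apply: edge_step; rewrite vert_face.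
apply/act_cat; exists (root c); split.
  apply: act_map_loops => i; rewrite mem_rev mem_iota => /andP [i_gt0 i_lt].
  have Hi : i <= k.+3 by rewrite -ltnS -[k.+4]addn1 addnC.
  split=> //; exists (Cface k.+2 i c); split; first exact: hf.1.
  by rewrite root_face //; case: i i_gt0 {i_lt Hi}.
rewrite -f_edge01.
exists (vert Cface c 1); split; first by apply: edge_step; rewrite vert_edge01.
exists (vert Cface c 1); split.
  by split=> //; exists (Cface k.+2 0 c); split; [exact: hf.1 | rewrite root_face].
exists (root c); split=> //.
by apply: edge_step; rewrite vert_edge01.
Qed.

Lemma act_bl k (r : P k.+2) :
  act_equiv [:: (GP X r, false)] ((GP X r, false) :: bl bface r).
Proof.
move=> v w; split=> [/act_GP [<- [c [fc rc]]] | [z [[<- [c [fc rc]]] h]]].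
  exists (root c); rewrite -rc; split; first by split=> //; exists c.
  by rewrite -fc; exact: act_bl_root.
have loop := act_bl_root k c; rewrite fc rc in loop.
by rewrite ((act_partial_inj _).1 _ _ _ h loop); apply/act_GP; split=> //; exists c.
Qed.

Lemma act_Mcong (u u' : word X P) : Mcong bface u u' -> act_equiv u u'.
Proof.
elim=> {u u'}.
- by [].
- by move=> u u' _ IH v w; rewrite IH.
- by move=> u u' u'' _ IH1 _ IH2 v w; rewrite IH1 IH2.
- move=> u u' s s' _ IH1 _ IH2 v w; rewrite !act_cat.
  by split=> -[z [h1 h2]]; exists z; [rewrite -IH1 -IH2 | rewrite IH1 IH2].
- exact: act_wagner1.
- exact: act_wagner2.
- exact: act_idem.
- exact: act_bl.
Qed.

End Action.

Theorem mainTheorem9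
  (X : Type) (P : nat -> Type) (n : nat)
  (hPn : forall k, n < k.+2 -> P k.+2 -> False)
  (bface : forall k, nat -> Bcell X P k.+1 -> Bcell X P k)
  (hB : simplicial_ids bface)
  (Ccell : nat -> Type) (Cface : forall k, nat -> Ccell k.+1 -> Ccell k)
  (hC : simplicial_ids Cface)
  (f : forall k, Ccell k -> Bcell X P k)
  (hf : immersion Cface bface f) :
  (forall l : letter X P, partial_injection (step Cface f l)) /\
  (forall u u' : word X P, Mcong bface u u' ->
     forall v w : Ccell 0, act Cface f u v w <-> act Cface f u' v w).
Proof.
split=> [l | u u' /(act_Mcong hC hf) equiv_uu'].
- exact: step_partial_inj hf l.
- exact: equiv_uu'.
Qed.
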